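(* Let $A$ be a finite set, $h\ge0$, and let $P$ be a probability measure on $(A^{\mathbb{Z}},\mathfrak{A}^{\mathbb{Z}})$ satisfying condition (B* ) with respect to $h$. Then for every $\varepsilon>0$ there exist subsets $\overline{C}_\varepsilon^{(n)}\subseteq A^{(n)}$, $n\in\mathbb{N}$, and a number $\overline{N}(\varepsilon)$ such that properties (1)–(4) of condition (B* ) hold for $\{\overline{C}_\varepsilon^{(n)}\}$ and $\overline N(\varepsilon)$, and moreover the full asymptotic equipartition property holds: $P^{(n)}(\mathbf{x})\in(e^{-n(h+\varepsilon)},e^{-n(h-\varepsilon)})$ for all $n\ge\overline{N}(\varepsilon)$ and all $\mathbf{x}\in\overline{C}_\varepsilon^{(n)}$.
   Context: $\mathfrak{A}^{\mathbb{Z}}$ is the $\sigma$-field on $A^{\mathbb{Z}}$ generated by cylinder sets. For $n\ge 1$, $A^{(n)}:=\prod_{i=1}^n A$ and $P^{(n)}$ denotes the marginal of $P$ on the coordinates $1,\dots,n$. For $\mathbf{x}=(x_i)_{i=1}^n$ let $\mathbf{x}_\flat:=(x_i)_{i=1}^{n-1}$, and for $C\subseteq A^{(n+1)}$ let $C_\flat:=\{\mathbf{x}_\flat:\mathbf{x}\in C\}$. Condition (B* ) w.r.t. $h$: for every $\varepsilon>0$ there exist subsets $C_\varepsilon^{(n)}\subseteq A^{(n)}$, $n\in\mathbb{N}$, and a number $N(\varepsilon)$ such that (1) $C_\varepsilon^{(n)}=(C_\varepsilon^{(n+1)})_\flat$ for all $n\ge1$; (2) $\#C_\varepsilon^{(n)}\in(e^{n(h-\varepsilon)},e^{n(h+\varepsilon)})$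 for $n\ge N(\varepsilon)$; (3) $P^{(n)}(\mathbf{x})<e^{-n(h-\varepsilon)}$ for all $n\ge N(\varepsilon)$ and all $\mathbf{x}\in C_\varepsilon^{(n)}$; (4) $P^{(n)}(C_\varepsilon^{(n)})>1-\varepsilon$ for all $n\ge1$. *)

From HB Require Import structures.
From mathcomp Require Import all_boot all_order all_algebra.
From mathcomp Require Import all_classical all_reals all_analysis.
Set Implicit Arguments. Unset Strict Implicit. Unset Printing Implicit Defensive.
Import Order.TTheory GRing.Theory Num.Theory.
Local Open Scope ring_scope.
Local Open Scope classical_set_scope.

(* The sequence space A^Z, for a finite alphabet A.  The point [a0] is only
   used to equip the type with the (pointedType) structure required by the
   measure-theory library; A is nonempty anyway. *)
Definition Aseq (A : finType) (a0 : A) := int -> A.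
HB.instance Definition _ (A : finType) (a0 : A) := Choice.on (Aseq a0).
HB.instance Definition _ (A : finType) (a0 : A) :=
  isPointed.Build (Aseq a0) (fun _ => a0).

Definition window (A : finType) (m : int) (n : nat) (w : int -> A)
  : n.-tuple A := [tuple w (m + (i.+1)%:Z)%R | i < n].

Definition cylinders (A : finType) (a0 : A) : set (set (Aseq a0)) :=
  [set S | exists (m : int) (n : nat) (B : {set n.-tuple A}),
           S = [set w : Aseq a0 | window m n w \in B]].

Definition seqSpace (A : finType) (a0 : A) := g_sigma_algebraType (@cylinders A a0).

Definition flat (A : finType) (n : nat) (x : n.+1.-tuple A) : n.-tuple A :=
  [tuple tnth x (widen_ord (leqnSn n) i) | i < n].

Definition flatset (A : finType) (n : nat) (C : {set n.+1.-tuple A})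
  : {set n.-tuple A} := [set flat x | x in C].

Section Marginal.
Context (R : realType) (A : finType) (a0 : A)
        (P : probability (seqSpace a0) R).
Definition marg_set (n : nat) (C : {set n.-tuple A}) : \bar R :=
  P [set w : seqSpace a0 | window 0 n w \in C].
Definition marg (n : nat) (x : n.-tuple A) : \bar R :=
  P [set w : seqSpace a0 | window 0 n w = x].

Definition B_props (h eps : R) (C : forall n : nat, {set n.-tuple A}) (N : nat)
  : Prop :=
  [/\ (forall n : nat, (1 <= n)%N -> C n = flatset (C n.+1)),
      (forall n : nat, (N <= n)%N ->
         expR (n%:R * (h - eps)) < #|C n|%:R < expR (n%:R * (h + eps))),
      (forall n : nat, (N <= n)%N -> forall x, x \in C n ->
         (marg x < (expR (- (n%:R * (h - eps))))%:E)%E) &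
      (forall n : nat, (1 <= n)%N -> ((1 - eps)%:E < marg_set (C n))%E)].

Definition condBstar (h : R) : Prop :=
  forall eps : R, 0 < eps ->
    exists (C : forall n : nat, {set n.-tuple A}) (N : nat), B_props h eps C N.
End Marginal.

From HB Require Import structures.
From mathcomp Require Import all_boot all_order all_algebra.
From mathcomp Require Import all_classical all_reals all_analysis.
From mathcomp Require Import ring lra.
Import Order.TTheory GRing.Theory Num.Theory.
Local Open Scope ring_scope.
Set Implicit Arguments. Unset Strict Implicit.

(* Apply (B* ) with a smaller tolerance d = min(eps/2, 1/4), obtaining sets
   C^(n).  Call x in C^(k) atypical if P^(k)(x) <= e^{-k(h+eps)}; as
   #C^(k) < e^{k(h+d)}, the atypical words of length k have total probability
   at most e^{-kd}, which is summable.  Keeping in C^(m) only the words whose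
   prefixes of every length k in [Nb, m] are typical therefore loses at most
   probability d once Nb is large.  These sets are not closed under taking
   prefixes any more, so we pass to their projective limit: a word of length n
   is kept if it extends to a kept word of every length m >= n.  As A^(n) is
   finite, the limit is attained at a finite m, which transfers the probability
   bound; the lower cardinality bound then follows from the probability bound
   and the upper bound (3) on point probabilities. *)

Lemma measure_bigsetU_le d (T : measurableType d) (R : realFieldType)
    (mu : {measure set T -> \bar R}) (I : Type) (s : seq I) (F : I -> set T) :
  (forall i, measurable (F i)) ->
  (mu (\big[setU/set0]_(i <- s) F i) <= \sum_(i <- s) mu (F i))%E.
Proof.
move=> mF; elim: s => [|j s IH]; first by rewrite !big_nil measure0.
rewrite !big_cons; apply: le_trans (measureU2 _ (mF j) _) _.
  exact: bigsetU_measurable.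
exact: leeD.
Qed.

Lemma sum_expr_tail_le (R : realType) (x : R) m M : 0 < x < 1 ->
  \sum_(m <= i < M) x ^+ i <= x ^+ m / (1 - x).
Proof.
case/andP => x_gt0 x_lt1; have [Mm|/ltnW/subnKC <-] := leqP M m.
  by rewrite big_geq // divr_ge0 ?exprn_ge0 ?ltW // subr_gt0.
rewrite geometric_partial_tail; apply: geometric_le_lim => //.
  exact/exprn_ge0/ltW.
by rewrite gtr0_norm.
Qed.

Lemma expR_Nmul_le (R : realType) (c d : R) : 0 < c -> 0 < d ->
  exists N : nat, forall n : nat, (N <= n)%N ->
    expR (- (n%:R * d)) <= c /\ 1 <= n%:R * d.
Proof.
move=> c_gt0 d_gt0; set K := Num.max c^-1 1.
have K_ge1 : 1 <= K by rewrite le_max lexx orbT.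
have K_ge0 : 0 <= K / d by rewrite divr_ge0 ?ltW // (lt_le_trans ltr01).
exists (Num.Def.archi_bound (K / d)) => n Nn.
have Knd : K < n%:R * d.
  rewrite -ltr_pdivrMr //; apply: lt_le_trans (archi_boundP K_ge0) _.
  by rewrite ler_nat.
split; last exact: le_trans K_ge1 (ltW Knd).
rewrite expRN -[c]invrK lef_pV2 ?posrE ?expR_gt0 ?invr_gt0 //.
apply: le_trans (ltW (le_lt_trans _ Knd)) _; first by rewrite /K le_max lexx.
by apply: le_trans (expR_ge1Dx _); rewrite lerDr.
Qed.

Section Prefix.
Variables (A : finType) (a0 : A).

(* Positions beyond [m] are padded with [a0]; only [k <= m] is ever used. *)
Definition tprefix k m (y : m.-tuple A) : k.-tuple A :=
  [tuple nth a0 y i | i < k].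

Lemma nth_tprefix k m (y : m.-tuple A) i : (i < k)%N ->
  nth a0 (tprefix k y) i = nth a0 y i.
Proof. by move=> ik; rewrite -[i]/(nat_of_ord (Ordinal ik)) nth_mktuple. Qed.

Lemma tprefix_tprefix k n m (y : m.-tuple A) : (k <= n)%N ->
  tprefix k (tprefix n y) = tprefix k y.
Proof.
move=> kn; apply: eq_from_tnth => i; rewrite !tnth_mktuple nth_tprefix //.
exact: leq_trans (ltn_ord i) kn.
Qed.

Lemma tprefix_id m (y : m.-tuple A) : tprefix m y = y.
Proof. by apply: eq_from_tnth => i; rewrite tnth_mktuple (tnth_nth a0). Qed.

Lemma flat_tprefix n (x : n.+1.-tuple A) : flat x = tprefix n x.
Proof. by apply: eq_from_tnth => i; rewrite !tnth_mktuple (tnth_nth a0). Qed.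

Lemma window_tprefix k m (w : int -> A) : (k <= m)%N ->
  window 0 k w = tprefix k (window 0 m w).
Proof.
move=> km; apply: eq_from_tnth => i; rewrite !tnth_mktuple.
have im : (i < m)%N := leq_trans (ltn_ord i) km.
by rewrite -/(nat_of_ord (Ordinal im)) nth_mktuple.
Qed.

Lemma mem_tprefix_flat_closed (C : forall n : nat, {set n.-tuple A}) :
  (forall n : nat, (1 <= n)%N -> C n = flatset (C n.+1)) ->
  forall k m (y : m.-tuple A), (1 <= k <= m)%N -> y \in C m ->
  tprefix k y \in C k.
Proof.
move=> C_flat k m; elim: m => [|m IH] y /andP[k1 km] yC.
  by move: (leq_trans k1 km).
case: (ltngtP k m.+1) km => // [|-> _]; last by rewrite tprefix_id.
rewrite ltnS => km _; rewrite -(tprefix_tprefix y km); apply: IH; first by rewrite k1.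
by rewrite -flat_tprefix C_flat ?imset_f // (leq_trans k1).
Qed.

End Prefix.

Section ProjectiveLimit.
Variables (A : finType) (a0 : A) (E : forall m : nat, {set m.-tuple A}).
Hypothesis E_tprefix : forall m, (1 <= m)%N ->
  forall y : m.+1.-tuple A, y \in E m.+1 -> tprefix a0 m y \in E m.

Definition limset n : {set n.-tuple A} :=
  [set x | `[< forall m, (n <= m)%N -> (1 <= m)%N ->
                         x \in [set tprefix a0 n y | y in E m] >]].

Lemma mem_limset n (x : n.-tuple A) : x \in limset n <->
  (forall m, (n <= m)%N -> (1 <= m)%N -> x \in [set tprefix a0 n y | y in E m]).
Proof. by rewrite inE asboolE. Qed.

Lemma subset_tprefix_imset n m m' : (n <= m)%N -> (1 <= m)%N -> (m <= m')%N ->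
  [set tprefix a0 n y | y in E m'] \subset [set tprefix a0 n y | y in E m].
Proof.
move=> nm m1 /subnK <-; elim: (m' - m)%N => [|j IH]; first by rewrite add0n.
apply: (fintype.subset_trans _ IH); apply/fintype.subsetP => _ /imsetP [y yE ->].
rewrite -(tprefix_tprefix _ _ (leq_trans nm (leq_addl j m))) imset_f //.
by apply: E_tprefix; rewrite // (leq_trans m1) ?leq_addl.
Qed.

(* The prefix sets decrease in [m] inside the finite set A^(n), so they stabilise. *)
Lemma limset_stable n : exists M, [/\ (n <= M)%N, (1 <= M)%N &
  limset n = [set tprefix a0 n y | y in E M]].
Proof.
have witness (x : n.-tuple A) : exists m, x \in limset n \/
    [/\ (n <= m)%N, (1 <= m)%N & x \notin [set tprefix a0 n y | y in E m]].
  have [xl|/negP] := boolP (x \in limset n); first by exists 0%N; left.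
  rewrite mem_limset => /existsNP [m /not_implyP [nm /not_implyP [m1 /negP]]].
  by exists m; right.
have [f hf] := choice witness.
pose M := maxn (maxn n 1) (\max_(x : n.-tuple A) f x).
have nM : (n <= M)%N by rewrite !leq_max leqnn.
have M1 : (1 <= M)%N by rewrite !leq_max leqnn orbT.
exists M; split => //; apply/setP => x; apply/idP/idP => [/mem_limset|xM].
  exact.
have [//|[nfx fx1 /negP[]]] := hf x.
apply: (fintype.subsetP (subset_tprefix_imset nfx fx1 _)) xM.
by rewrite leq_max (leq_bigmax x) orbT.
Qed.

Lemma limset_flat n : (1 <= n)%N -> limset n = flatset (limset n.+1).
Proof.
move=> n1; apply/setP => x; apply/idP/imsetP.
- move=> /mem_limset xl; have [M [nM M1 lim_eq]] := limset_stable n.+1.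
  have /imsetP [y yE ->] := xl M (ltnW nM) M1.
  exists (tprefix a0 n.+1 y); first by rewrite lim_eq imset_f.
  by rewrite (flat_tprefix a0) tprefix_tprefix.
- case=> x' /mem_limset x'l ->; apply/mem_limset => m nm m1.
  have m'1 : (1 <= maxn m n.+1)%N by rewrite (leq_trans m1) ?leq_maxl.
  have /imsetP [y yE ->] := x'l _ (leq_maxr m n.+1) m'1.
  apply: (fintype.subsetP (subset_tprefix_imset nm m1 (leq_maxl m n.+1))).
  by rewrite (flat_tprefix a0) tprefix_tprefix // imset_f.
Qed.

Lemma limset_subset n : (1 <= n)%N -> limset n \subset E n.
Proof.
move=> n1; apply/fintype.subsetP => x /mem_limset /(_ n (leqnn n) n1).
by case/imsetP => y yE ->; rewrite tprefix_id.
Qed.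

End ProjectiveLimit.

Definition cyl (A : finType) (a0 : A) n (S : {set n.-tuple A}) : set (seqSpace a0) :=
  [set w | window 0 n w \in S]%classic.
Arguments cyl {A} a0 {n} S.

Section Cylinders.
Variables (R : realType) (A : finType) (a0 : A) (P : probability (seqSpace a0) R).
Local Open Scope classical_set_scope.
Local Open Scope ereal_scope.

Lemma measurable_cyl n (S : {set n.-tuple A}) : measurable (cyl a0 S).
Proof. by apply: sub_gen_smallest; exists 0%R, n, S. Qed.

Lemma marg_set_le_card n (S : {set n.-tuple A}) (c : R) :
  (forall x, x \in S -> marg P x <= c%:E) -> marg_set P S <= (#|S|%:R * c)%:E.
Proof.
move=> S_le; have cyl1 x : [set w : seqSpace a0 | window 0 n w = x] = cyl a0 [set x].
  by apply/seteqP; split => w; rewrite /cyl /= inE => /eqP.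
have cylS : cyl a0 S `<=` \big[setU/set0]_(x <- enum S) cyl a0 [set x].
  move=> w Sw; rewrite -bigcup_seq; exists (window 0 n w) => /=.
    by rewrite mem_enum.
  by rewrite /cyl /= inE.
apply: le_trans (le_measure _ _ _ cylS) _; rewrite ?inE.
- exact: measurable_cyl.
- by apply: bigsetU_measurable => x _; exact: measurable_cyl.
apply: le_trans (measure_bigsetU_le _ _ (fun x => measurable_cyl _)) _.
rewrite big_enum /=; apply: le_trans (lee_sum (g := fun=> c%:E) _ _) _.
  by move=> x Sx; rewrite -cyl1; exact: S_le.
by rewrite sumEFin sumr_const mulr_natl.
Qed.

End Cylinders.

Section Equipartition.
Variables (R : realType) (A : finType) (a0 : A) (P : probability (seqSpace a0) R).
Variables (h eps d : R) (C : forall n : nat, {set n.-tuple A}) (N0 Nb : nat).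
Hypotheses (d_gt0 : 0 < d) (dd_le_eps : d + d <= eps) (d_le : d <= 4^-1).
Hypothesis BC : B_props P h d C N0.
Hypotheses (N0_le_Nb : (N0 <= Nb)%N) (Nb_d_ge1 : 1 <= Nb%:R * d).
Hypothesis tail_le : expR (- d) ^+ Nb / (1 - expR (- d)) <= d.

Let Nb_gt0 : (0 < Nb)%N.
Proof. by move: Nb_d_ge1; case: Nb => //; rewrite mul0r ler10. Qed.

Definition typical k (x : k.-tuple A) : bool :=
  ((expR (- (k%:R * (h + eps))))%:E < marg P x)%E.

Definition Ctyp m : {set m.-tuple A} :=
  [set y in C m | `[< forall k, (Nb <= k <= m)%N -> typical (tprefix a0 k y) >]].

Definition atypical k : {set k.-tuple A} := [set x in C k | ~~ typical x].

Definition Cbar := limset a0 Ctyp.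

Lemma Ctyp_tprefix m : (1 <= m)%N ->
  forall y : m.+1.-tuple A, y \in Ctyp m.+1 -> tprefix a0 m y \in Ctyp m.
Proof.
have [C_flat _ _ _] := BC.
move=> m1 y; rewrite !inE => /andP[yC /asboolP y_typ]; apply/andP; split.
  by apply: mem_tprefix_flat_closed yC; rewrite // m1 /=.
apply/asboolP => k /andP[Nk km]; rewrite tprefix_tprefix //; apply: y_typ.
by rewrite Nk (leq_trans km).
Qed.

Lemma Cbar_sub_C n : (1 <= n)%N -> Cbar n \subset C n.
Proof.
move=> n1; apply: fintype.subset_trans (limset_subset a0 Ctyp n1) _.
by apply/fintype.subsetP => x; rewrite inE => /andP[].
Qed.

Lemma Cbar_typical n (x : n.-tuple A) : (Nb <= n)%N -> x \in Cbar n -> typical x.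
Proof.
move=> Nn /(fintype.subsetP (limset_subset a0 Ctyp (leq_trans Nb_gt0 Nn))).
by rewrite inE => /andP[_ /asboolP /(_ n)]; rewrite tprefix_id Nn leqnn; apply.
Qed.

Lemma marg_set_atypical k : (Nb <= k)%N ->
  (marg_set P (atypical k) <= (expR (- d) ^+ k)%:E)%E.
Proof.
have [_ C_card _ _] := BC; move=> Nk.
apply: le_trans (marg_set_le_card (c := expR (- (k%:R * (h + eps)))) _) _.
  by move=> x; rewrite inE => /andP[_]; rewrite /typical -leNgt.
have card_atypical : (#|atypical k| <= #|C k|)%N.
  by apply/subset_leq_card/fintype.subsetP => x; rewrite inE => /andP[].
have /andP[_ C_lt] := C_card k (leq_trans N0_le_Nb Nk).
rewrite lee_fin.
apply: (@le_trans _ _ (expR (k%:R * (h + d)) * expR (- (k%:R * (h + eps))))).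
  by rewrite ler_wpM2r ?expR_ge0 // (le_trans _ (ltW C_lt)) // ler_nat.
rewrite -expRD -expRM_natl ler_expR.
have : 0 <= k%:R * (eps - (d + d)) by rewrite mulr_ge0 // subr_ge0.
lra.
Qed.

Lemma cyl_C_subset M : (cyl a0 (C M) `<=` cyl a0 (Ctyp M) `|`
  \big[setU/set0]_(Nb <= k < M.+1) cyl a0 (atypical k))%classic.
Proof.
have [C_flat _ _ _] := BC.
move=> w; rewrite /cyl /= => wC.
have [wCtyp|] := boolP (window 0 M w \in Ctyp M); first by left.
rewrite inE wC /= => /asboolPn /existsNP [k /not_implyP [/andP [Nk kM] not_typ]].
right; rewrite -bigcup_seq; exists k => /=; first by rewrite mem_index_iota Nk ltnS.
rewrite inE (window_tprefix a0 w kM) mem_tprefix_flat_closed //=.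
  exact/negP.
by rewrite kM (leq_trans Nb_gt0).
Qed.

Lemma marg_set_Ctyp M : (1 <= M)%N -> ((1 - (d + d))%:E < marg_set P (Ctyp M))%E.
Proof.
have [_ _ _ C_prob] := BC; move=> M1.
have sum_atypical : (\sum_(Nb <= k < M.+1) marg_set P (atypical k) <= d%:E)%E.
  apply: (@le_trans _ _ (\sum_(Nb <= k < M.+1) (expR (- d) ^+ k)%:E)%E).
    by rewrite !big_nat; apply: lee_sum => k /andP[Nk _]; exact: marg_set_atypical.
  rewrite sumEFin lee_fin; apply: le_trans tail_le; apply: sum_expr_tail_le.
  by rewrite expR_gt0 expR_lt1 oppr_lt0.
have C_le : (marg_set P (C M) <=
    marg_set P (Ctyp M) + \sum_(Nb <= k < M.+1) marg_set P (atypical k))%E.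
  have m_atypical : measurable (\big[setU/set0]_(Nb <= k < M.+1) cyl a0 (atypical k)).
    by apply: bigsetU_measurable => k _; exact: measurable_cyl.
  apply: le_trans (le_measure _ _ _ (@cyl_C_subset M)) _; rewrite ?inE.
  - exact: measurable_cyl.
  - exact: measurableU (measurable_cyl _) m_atypical.
  apply: le_trans (measureU2 _ (measurable_cyl _) m_atypical) _.
  by apply: leeD => //; exact: measure_bigsetU_le (fun k => measurable_cyl _).
have := lt_le_trans (C_prob M M1) (le_trans C_le (leeD (lexx _) sum_atypical)).
rewrite /marg_set -[P (cyl a0 (Ctyp M))]fineK; last first.
  by apply: fin_num_measure; exact: measurable_cyl.
by rewrite -EFinD !lte_fin; lra.
Qed.

Lemma marg_set_Cbar n : (1 <= n)%N -> ((1 - (d + d))%:E < marg_set P (Cbar n))%E.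
Proof.
move=> n1; have [M [nM M1 Cbar_eq]] := limset_stable Ctyp_tprefix n.
apply: lt_le_trans (marg_set_Ctyp M1) _; apply: le_measure; rewrite ?inE.
- exact: measurable_cyl.
- exact: measurable_cyl.
move=> w /= wCtyp; rewrite /Cbar Cbar_eq (window_tprefix a0 w nM).
exact: imset_f.
Qed.

Lemma card_Cbar n : (Nb <= n)%N ->
  expR (n%:R * (h - eps)) < #|Cbar n|%:R < expR (n%:R * (h + eps)).
Proof.
have [_ C_card C_marg _] := BC; move=> Nn.
have n1 := leq_trans Nb_gt0 Nn; have N0n := leq_trans N0_le_Nb Nn.
have d_le_eps : d <= eps by move: d_gt0 dd_le_eps; lra.
have /andP[_ C_lt] := C_card n N0n.
apply/andP; split; last first.
  apply: (@le_lt_trans _ _ #|C n|%:R).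
    by rewrite ler_nat subset_leq_card ?Cbar_sub_C.
  by apply: lt_le_trans C_lt _; rewrite ler_expR ler_wpM2l // lerD2l.
have nd_ge1 : 1 <= n%:R * (eps - d).
  apply: le_trans Nb_d_ge1 _; apply: ler_pM => //; first exact: ltW.
    by rewrite ler_nat.
  by move: dd_le_eps; lra.
have mass_ge1 : 1 <= (1 - (d + d)) * expR (n%:R * (eps - d)).
  have Y_ge2 : 2 <= expR (n%:R * (eps - d)).
    by have := expR_ge1Dx (n%:R * (eps - d)); lra.
  have : 2^-1 <= 1 - (d + d) by move: d_le; lra.
  nra.
have Cbar_le : (marg_set P (Cbar n) <=
    (#|Cbar n|%:R * expR (- (n%:R * (h - d))))%:E)%E.
  apply: marg_set_le_card => x xC; apply/ltW/C_marg => //.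
  exact: fintype.subsetP (Cbar_sub_C n1) x xC.
(* 1 - 2d < #Cbar e^{-n(h-d)} and e^{n(h-d)} = e^{n(eps-d)} e^{n(h-eps)}. *)
have := lt_le_trans (marg_set_Cbar n1) Cbar_le.
rewrite lte_fin expRN ltr_pdivlMr ?expR_gt0 //.
rewrite (_ : n%:R * (h - d) = n%:R * (eps - d) + n%:R * (h - eps)); last by ring.
by rewrite expRD mulrA; apply: le_lt_trans; rewrite ler_peMl ?expR_ge0.
Qed.

Lemma Cbar_B_props : B_props P h eps Cbar Nb.
Proof.
have [_ _ C_marg _] := BC.
split => [n n1||n Nn x xC|n n1].
- exact: (limset_flat Ctyp_tprefix n1).
- exact: card_Cbar.
- have n1 := leq_trans Nb_gt0 Nn.
  apply: lt_le_trans (C_marg n (leq_trans N0_le_Nb Nn) x _) _.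
    exact: fintype.subsetP (Cbar_sub_C n1) x xC.
  rewrite lee_fin ler_expR lerN2 ler_wpM2l //.
  by move: d_gt0 dd_le_eps; lra.
- by apply: le_lt_trans (marg_set_Cbar n1); rewrite lee_fin; move: dd_le_eps; lra.
Qed.

End Equipartition.

Theorem mainTheorem2 (R : realType) (A : finType) (a0 : A)
  (P : probability (seqSpace a0) R) (h : R) :
  0 <= h -> condBstar P h ->
  forall eps : R, 0 < eps ->
    exists (C : forall n : nat, {set n.-tuple A}) (N : nat),
      B_props P h eps C N /\
      (forall n : nat, (N <= n)%N -> forall x, x \in C n ->
         ((expR (- (n%:R * (h + eps))))%:E < marg P x)%E /\
         (marg P x < (expR (- (n%:R * (h - eps))))%:E)%E).
Proof.
move=> _ condB eps eps_gt0; pose d : R := Num.min (eps / 2) 4^-1.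
have d_gt0 : 0 < d by rewrite /d lt_min divr_gt0 ?invr_gt0 ?ltr0n.
have dd_le_eps : d + d <= eps.
  have : d <= eps / 2 by rewrite /d ge_min lexx.
  lra.
have d_le : d <= 4^-1 by rewrite /d ge_min lexx orbT.
have [C [N0 BC]] := condB d d_gt0.
have geom_den_gt0 : 0 < 1 - expR (- d) by rewrite subr_gt0 expR_lt1 oppr_lt0.
have [N1 tail] := expR_Nmul_le (mulr_gt0 d_gt0 geom_den_gt0) d_gt0.
pose Nb := maxn N0 N1; have [tail_Nb Nb_d_ge1] := tail Nb (leq_maxr _ _).
have tail_le : expR (- d) ^+ Nb / (1 - expR (- d)) <= d.
  by rewrite ler_pdivrMr //; move: tail_Nb; rewrite -mulrN expRM_natl.
have Cbar_props :=
  Cbar_B_props d_gt0 dd_le_eps d_le BC (leq_maxl _ _) Nb_d_ge1 tail_le.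
exists (Cbar P h eps C Nb), Nb; split => // n Nn x xC; split.
  by have := Cbar_typical Nb_d_ge1 Nn xC.
by have [_ _ upper _] := Cbar_props; exact: upper.
Qed.
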